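(* For every fixed $k,K\in\mathbf{N}$ there is a finite set of permutations $P$ such that $$\{\pi\in S:\ \mathrm{al}(\pi)<K\ \&\ s_k(\pi)<K\}\subset P[H_k^+\cup H_k^-].$$
   Context: $S_n$ is the set of permutations of $[n]$, $S=\bigcup_n S_n$; $\pi\prec\rho$ means $\rho$ has a subsequence order-isomorphic to $\pi$; $\pi|A$ is the permutation order-isomorphic to the subsequence of $\pi$ at positions in $A$. Alternating: $\sigma(\{1,3,5,\dots\})>\sigma(\{2,4,6,\dots\})$. $\mathrm{al}(\pi)$ is the maximum length of an alternating $\sigma$ with $\sigma\prec\pi$ or $\sigma\prec\pi^{-1}$. For $\sigma\in S_n,\tau\in S_m$, $\sigma\oplus\tau\in S_{n+m}$ equals $\sigma(i)$ at $i\le n$ and $n+\tau(i-n)$ at $i>n$; $\sigma\ominus\tau$ equals $m+\sigma(i)$ at $i\le n$ and $\tau(i-n)$ at $i>n$. Up-(down-)indecomposable means not of the form $\sigma\oplus\tau$ ($\sigma\ominus\tau$) with both nonempty; $h^+(\pi)$ ($h^-(\pi)$) is the maximum length of a block in the unique decomposition of $\pi$ as a $\oplus$-sum of up-indecomposables ($\ominus$-sum of down-indecomposables). $H_k^\pm=\{\pi\in S:h^\pm(\pi)<k\}$. For $k\ge2$ and $\pi\in S_n$, $s_k(\pi)$ is the number $r$ of intervals in the greedy partition $I_1<\dots<I_r$ of $[n]$ where $I_1$ is the longest initial interval with $\pi|I_1\in H_k^+\cup H_k^-$, $I_2$ the longest following interval with $\pi|I_2\in H_k^+\cup H_k^-$,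 etc.; $s_1(\pi)=\infty$ by convention. Inflation: for $\sigma\in S_m$ and $\tau_i\in S_{n_i}$ ($i=1,\dots,m$), $\sigma[\tau_1,\dots,\tau_m]\in S_{n_1+\dots+n_m}$ is the permutation whose positions split into consecutive intervals of lengths $n_1,\dots,n_m$, such that the restriction to the $i$-th interval is order-isomorphic to $\tau_i$, and the $i$-th and $j$-th intervals' value sets are intervals of integers ordered as $\sigma(i)$ versus $\sigma(j)$ (i.e. each point of $\sigma$ is replaced by a small copy of $\tau_i$). For sets $P,Q\subset S$, $P[Q]=\{\pi[\sigma_1,\dots,\sigma_m]: m\in\mathbf{N},\ \pi\in P\cap S_m,\ \sigma_i\in Q\}$. *)

(* Permutations of [n] are represented as sequences of
   natural numbers that are permutations of 0..n-1 (0-based values;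
   position i of the sequence holds pi(i+1)-1). *)
From mathcomp Require Import all_boot all_order.
Set Implicit Arguments. Unset Strict Implicit. Unset Printing Implicit Defensive.

Definition is_perm (p : seq nat) : bool := perm_eq p (iota 0 (size p)).

Definition std (s : seq nat) : seq nat :=
  map (fun x => count (fun y => y < x) s) s.

Definition restr (p : seq nat) (m : bitseq) : seq nat := std (mask m p).

Definition contains (sigma p : seq nat) : bool :=
  [exists m : (size p).-tuple bool, restr p m == sigma].

Definition inv (p : seq nat) : seq nat := map (fun v => index v p) (iota 0 (size p)).

(* alternating: every value at an odd (1-based) position exceeds every value
   at an even (1-based) position *)
Definition alternating (s : seq nat) : bool :=
  [forall i : 'I_(size s), forall j : 'I_(size s),
     (~~ odd i && odd j) ==> (nth 0 s j < nth 0 s i)].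

Definition alt_of_len (p : seq nat) (j : nat) : bool :=
  [exists m : (size p).-tuple bool,
     (size (restr p m) == j) && alternating (restr p m)].

Definition al (p : seq nat) : nat :=
  \max_(j < (size p).+1 | alt_of_len p j || alt_of_len (inv p) j) j.

Definition oplus (s t : seq nat) : seq nat := s ++ map (addn (size s)) t.
Definition ominus (s t : seq nat) : seq nat := map (addn (size t)) s ++ t.

Definition up_indec (p : seq nat) : Prop :=
  ~ exists s t, [/\ is_perm s, is_perm t, s <> [::], t <> [::] & p = oplus s t].
Definition down_indec (p : seq nat) : Prop :=
  ~ exists s t, [/\ is_perm s, is_perm t, s <> [::], t <> [::] & p = ominus s t].

Definition plus_decomp (bs : seq (seq nat)) (p : seq nat) : Prop :=
  [/\ p = foldr oplus [::] bs,
      forall b, b \in bs -> is_perm b /\ b <> [::] & 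
      forall b, b \in bs -> up_indec b].
Definition minus_decomp (bs : seq (seq nat)) (p : seq nat) : Prop :=
  [/\ p = foldr ominus [::] bs,
      forall b, b \in bs -> is_perm b /\ b <> [::] & 
      forall b, b \in bs -> down_indec b].

(* membership in H_k^+ / H_k^- : h^±(p) < k (the decomposition is unique) *)
Definition Hplus (k : nat) (p : seq nat) : Prop :=
  is_perm p /\ exists bs, plus_decomp bs p /\ (forall b, b \in bs -> size b < k).
Definition Hminus (k : nat) (p : seq nat) : Prop :=
  is_perm p /\ exists bs, minus_decomp bs p /\ (forall b, b \in bs -> size b < k).
Definition Hpm (k : nat) (p : seq nat) : Prop := Hplus k p \/ Hminus k p.

(* pi|[a, b)  (0-based positions a..b-1) *)
Definition slice (p : seq nat) (a b : nat) : seq nat := std (take (b - a) (drop a p)).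

Inductive greedy (k : nat) (p : seq nat) : nat -> nat -> Prop :=
| greedy_end : greedy k p (size p) 0
| greedy_step a b r :
    a < b -> b <= size p -> Hpm k (slice p a b) ->
    (forall b', b < b' -> b' <= size p -> ~ Hpm k (slice p a b')) ->
    greedy k p b r -> greedy k p a r.+1.

(* s_k(p) = r (finite); for k < 2 no finite value (s_1 = infinity) *)
Definition s_is (k : nat) (p : seq nat) (r : nat) : Prop :=
  2 <= k /\ greedy k p 0 r.

Definition inflate (sigma : seq nat) (taus : seq (seq nat)) : seq nat :=
  flatten [seq map (addn (\sum_(j < size sigma | nth 0 sigma j < nth 0 sigma i)
                              size (nth [::] taus j)))
               (nth [::] taus i) | i <- iota 0 (size sigma)].

Definition in_inflation (P : seq (seq nat)) (Q : seq nat -> Prop) (p : seq nat) : Prop :=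
  exists sigma taus, [/\ sigma \in P, is_perm sigma, size taus = size sigma,
    forall t, t \in taus -> is_perm t /\ Q t & p = inflate sigma taus].

From Pilot Require Import Defs.
From mathcomp Require Import all_boot all_order zify.
Set Implicit Arguments. Unset Strict Implicit. Unset Printing Implicit Defensive.

(* Cut [p] greedily into [r < K] pieces, each a direct or a skew sum of blocks
   of size [< k].  Inside a piece, group consecutive blocks into chunks whose
   values form an interval of values of [p], splitting into singletons every
   block that straddles a value from outside the piece.  Each chunk is again in
   [H_k^+ \/ H_k^-], and [p] is the inflation by the chunks of the pattern of
   their first entries.  A new chunk is forced only by an outside value lying
   inside a block or between two blocks; the forcing values and the piece values
   they separate form a monotone sequence whose positions alternate between the
   piece and one of its sides, i.e. an alternating pattern of [p^-1].  Since
   [al p < K], a piece has at most [(k+1) K] chunks, so the inflated pattern is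
   a permutation of size at most [(k+1) K^2]. *)

Definition rank (s : seq nat) (x : nat) : nat := count (fun y => y < x) s.

Lemma stdE s : std s = map (rank s) s. Proof. by []. Qed.

Lemma size_std s : size (std s) = size s. Proof. by rewrite size_map. Qed.

Lemma rank_le s x y : x <= y -> rank s x <= rank s y.
Proof. by move=> xy; apply: sub_count => z /= zx; apply: leq_trans zx xy. Qed.

Lemma rank_lt s x y : x < y -> x \in s -> rank s x < rank s y.
Proof.
move=> xy; elim: s => //= a s IH; rewrite inE => /orP[/eqP<-|xs].
  rewrite /rank /= ltnn xy add1n ltnS.
  by apply: sub_count => z /= zx; apply: ltn_trans zx xy.
have := IH xs; rewrite /rank /=; case: (ltnP a x) => ax.
  by rewrite (ltn_trans ax xy) !add1n ltnS.
by case: (a < y); rewrite ?add0n ?add1n // => /ltnW.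
Qed.

Lemma ltn_rank s x y : x \in s -> (rank s x < rank s y) = (x < y).
Proof.
move=> xs; case: (ltnP x y) => xy; first exact: rank_lt.
by rewrite ltnNge rank_le.
Qed.

Lemma rank_inj s : {in s &, injective (rank s)}.
Proof.
move=> x y xs ys e; case: (ltngtP x y) => // h.
  by have := rank_lt h xs; rewrite e ltnn.
by have := rank_lt h ys; rewrite e ltnn.
Qed.

Lemma rank_lt_size s x : x \in s -> rank s x < size s.
Proof.
move=> xs; rewrite /rank -(count_predC (fun y => y < x) s) -addn1 leq_add2l.
by rewrite -has_count; apply/hasP; exists x => //=; rewrite ltnn.
Qed.

Lemma std_map_mono (f : nat -> nat) s :
  {in s &, forall x y, (f x < f y) = (x < y)} -> std (map f s) = std s.
Proof.
move=> f_mono; rewrite /std -map_comp; apply/eq_in_map => x xs /=.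
by rewrite count_map; apply: eq_in_count => y ys /=; apply: f_mono.
Qed.

Lemma std_map_addn c s : std (map (addn c) s) = std s.
Proof. by apply: std_map_mono => x y _ _; rewrite ltn_add2l. Qed.

Lemma std_map_rank q s : {subset s <= q} -> std (map (rank q) s) = std s.
Proof. by move=> sq; apply: std_map_mono => x y xs _; apply: ltn_rank; apply: sq. Qed.

Lemma std_take q n : std (take n (std q)) = std (take n q).
Proof. by rewrite [std q]stdE -map_take std_map_rank // => x /mem_take. Qed.

Lemma std_drop q n : std (drop n (std q)) = std (drop n q).
Proof. by rewrite [std q]stdE -map_drop std_map_rank // => x /mem_drop. Qed.

Lemma is_perm_mem_lt s x : is_perm s -> x \in s -> x < size s.
Proof. by move=> /perm_mem ->; rewrite mem_iota. Qed.

Lemma is_perm_uniq s : is_perm s -> uniq s.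
Proof. by move=> ps; rewrite (perm_uniq ps) iota_uniq. Qed.

Lemma count_lt_iota x n : x <= n -> count (fun y => y < x) (iota 0 n) = x.
Proof.
move=> xn; rewrite -(subnKC xn) iotaD count_cat.
rewrite (eq_in_count (a2 := predT)); last by move=> y; rewrite mem_iota.
rewrite count_predT size_iota (eq_in_count (a2 := pred0)) ?count_pred0 ?addn0 //.
by move=> y; rewrite mem_iota /= add0n => /andP[h _]; rewrite ltnNge h.
Qed.

Lemma rank_perm p x : is_perm p -> x \in p -> rank p x = x.
Proof.
move=> pp xp; rewrite /rank (permP pp) count_lt_iota //.
exact/ltnW/is_perm_mem_lt.
Qed.

Lemma std_id s : is_perm s -> std s = s.
Proof.
by move=> ps; rewrite stdE -[RHS]map_id; apply/eq_in_map => x; apply: rank_perm.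
Qed.

Lemma std_is_perm s : uniq s -> is_perm (std s).
Proof.
move=> us; rewrite /is_perm size_std.
have ust : uniq (std s) by rewrite map_inj_in_uniq //; apply: rank_inj.
have sub : {subset std s <= iota 0 (size s)}.
  by move=> y /mapP[x xs ->]; rewrite mem_iota add0n rank_lt_size.
have size_le : size (iota 0 (size s)) <= size (std s) by rewrite size_iota size_std.
have [_ std_iota] := uniq_min_size ust sub size_le.
by apply: uniq_perm; rewrite ?iota_uniq.
Qed.

(* The order in which the blocks of a direct sum ([d = true]) or of a skew sum
   ([d = false]) follow each other. *)
Definition dlt (d : bool) (a b : nat) : bool := if d then a < b else b < a.

Lemma dlt_trans d : transitive (dlt d).
Proof. by case: d => a b c /=; [apply: ltn_trans | move=> ba cb; apply: ltn_trans cb ba]. Qed.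

Lemma dlt_asym d a b : dlt d a b -> dlt d b a -> False.
Proof. by move=> ab /(dlt_trans ab); rewrite /dlt; case: (d); rewrite ltnn. Qed.

Lemma dlt_total d a b : a != b -> dlt d a b || dlt d b a.
Proof. by case: d => /=; case: ltngtP. Qed.

Lemma dlt_rank d q x y : x \in q -> y \in q -> dlt d (rank q x) (rank q y) = dlt d x y.
Proof. by case: d => xq yq /=; apply: ltn_rank. Qed.

Lemma allrel_flattenr (r : nat -> nat -> bool) xs vs :
  allrel r xs (flatten vs) = all (allrel r xs) vs.
Proof. by elim: vs => [|v vs IH] /=; rewrite ?allrel0r ?allrel_catr ?IH. Qed.

Definition straddles (c : seq nat) (x : nat) : bool :=
  has (fun a => a < x) c && has (fun b => x < b) c.

Lemma straddlesE d c x :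
  straddles c x = has (fun a => dlt d a x) c && has (fun b => dlt d x b) c.
Proof. by case: d; rewrite // andbC. Qed.

Definition dsum (d : bool) : seq nat -> seq nat -> seq nat :=
  if d then oplus else ominus.

Lemma dsum_perm d s t : is_perm s -> is_perm t -> is_perm (dsum d s t).
Proof.
have iota_shift m n : iota m n = map (addn m) (iota 0 n) by rewrite -iotaDl addn0.
rewrite /is_perm /dsum /oplus /ominus => ps pt.
case: d; rewrite size_cat size_map.
  by rewrite iotaD add0n (iota_shift (size s)) perm_cat ?perm_map.
by rewrite addnC iotaD add0n (iota_shift (size t)) perm_catC perm_cat ?perm_map.
Qed.

Lemma foldr_dsum_perm d bs :
  {in bs, forall b, is_perm b} -> is_perm (foldr (dsum d) [::] bs).
Proof.
elim: bs => //= b bs IH pbs; apply: dsum_perm; first by apply: pbs; rewrite mem_head.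
by apply: IH => c cbs; apply: pbs; rewrite inE cbs orbT.
Qed.

Lemma std_cat_dsum d s t : allrel (dlt d) s t -> std (s ++ t) = dsum d (std s) (std t).
Proof.
move=> /allrelP st; rewrite /std /dsum map_cat.
case: d st => st; rewrite /oplus /ominus size_map -map_comp; congr (_ ++ _);
  apply/eq_in_map => x xs /=; rewrite count_cat.
- rewrite [count _ t](eq_in_count (a2 := pred0)) ?count_pred0 ?addn0 //.
  by move=> y yt /=; apply/negbTE; rewrite -leqNgt ltnW //; apply: st.
- by rewrite [count _ s](eq_in_count (a2 := predT)) ?count_predT // => y ys; apply: st.
- by rewrite addnC [count _ t](eq_in_count (a2 := predT)) ?count_predT // => y yt; apply: st.
- rewrite [count _ s](eq_in_count (a2 := pred0)) ?count_pred0 //.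
  by move=> y ys /=; apply/negbTE; rewrite -leqNgt ltnW //; apply: st.
Qed.

Lemma dsum_split d s t : is_perm s -> is_perm t ->
  let st := dsum d s t in
  [/\ std (take (size s) st) = s, std (drop (size s) st) = t &
      allrel (dlt d) (take (size s) st) (drop (size s) st)].
Proof.
move=> ps pt; rewrite /dsum /oplus /ominus; case: d.
  rewrite take_size_cat // drop_size_cat // std_map_addn !std_id //; split => //.
  by rewrite allrel_mapr; apply/allrelP => x y xs _; apply/ltn_addr/is_perm_mem_lt.
rewrite take_size_cat ?drop_size_cat ?size_map // std_map_addn !std_id //; split => //.
by rewrite allrel_mapl; apply/allrelP => x y _ yt; apply/ltn_addr/is_perm_mem_lt.
Qed.

Lemma std_eq_foldr_dsum d q bs :
  std q = foldr (dsum d) [::] bs -> {in bs, forall b, is_perm b} ->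
  exists qs, [/\ flatten qs = q, map std qs = bs & pairwise (allrel (dlt d)) qs].
Proof.
elim: bs q => [|b bs IH] q E pbs.
  by exists [::]; split => //; apply/esym/size0nil; rewrite -(size_std q) E.
have pb : is_perm b by apply: pbs; rewrite mem_head.
have pbs' : {in bs, forall c, is_perm c} by move=> c cbs; apply: pbs; rewrite inE cbs orbT.
have {}E : dsum d b (foldr (dsum d) [::] bs) = std q by [].
have [] := dsum_split d pb (foldr_dsum_perm d pbs'); rewrite /= E std_take std_drop.
set q1 := take (size b) q; set q2 := drop (size b) q => S1 S2 A.
have [qs [f1 f2 f3]] := IH q2 S2 pbs'.
exists (q1 :: qs); split => /=; [by rewrite f1 cat_take_drop | by rewrite S1 f2 |].
rewrite f3 andbT -allrel_flattenr f1.
move: A; rewrite [std q]stdE -map_take -map_drop allrel_mapl allrel_mapr.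
rewrite (eq_in_allrel (P := mem q) (Q := mem q) (r' := dlt d)) //.
- by move=> x xq y yq; apply: dlt_rank.
- by apply/allP => x /mem_take.
- by apply/allP => x /mem_drop.
Qed.

Definition hblock (k : nat) (d : bool) (b : seq nat) : Prop :=
  [/\ is_perm b, b <> [::], if d then up_indec b else down_indec b & size b < k].

Lemma hblock_single k d a : 2 <= k -> hblock k d (std [:: a]).
Proof.
move=> k2; rewrite /std /= ltnn; split => //.
by case: d => -[s [t [_ _ sn tn /(congr1 size)]]]; rewrite /= size_cat size_map;
  case: s sn => // ? ? _; case: t tn => // ? ? _; rewrite addnS addSn.
Qed.

Lemma Hpm_foldr_dsum k d bs :
  (forall b, b \in bs -> hblock k d b) -> Hpm k (foldr (dsum d) [::] bs).
Proof.
move=> bs_ok; have pbs : {in bs, forall b, is_perm b} by move=> b /bs_ok[].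
case: d bs_ok pbs => bs_ok pbs; [left | right];
  (split; first exact: (foldr_dsum_perm _ pbs)); exists bs;
  (split; last by move=> b /bs_ok[]); split=> // b /bs_ok[] //.
Qed.

Lemma Hpm_decomp k p : Hpm k p ->
  exists d bs, p = foldr (dsum d) [::] bs /\ forall b, b \in bs -> hblock k d b.
Proof.
case=> -[_ [bs [[E G1 G2] G3]]]; [exists true | exists false]; exists bs;
  split=> // b b_bs; have [pb b_nil] := G1 b b_bs; split=> //; by [apply: G2 | apply: G3].
Qed.

Lemma Hpm_flatten k d vs : pairwise (allrel (dlt d)) vs ->
  (forall v, v \in vs -> hblock k d (std v)) -> Hpm k (std (flatten vs)).
Proof.
move=> vs_sorted vs_ok.
have -> : std (flatten vs) = foldr (dsum d) [::] (map std vs).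
  elim: vs vs_sorted {vs_ok} => // v vs IH; rewrite pairwise_cons -allrel_flattenr.
  by case/andP => v_vs vs_sorted /=; rewrite (std_cat_dsum v_vs) IH.
by apply: Hpm_foldr_dsum => _ /mapP[v v_vs ->]; apply: vs_ok.
Qed.

Lemma Hpm_blocks k q : Hpm k (std q) ->
  exists d qs, [/\ flatten qs = q, pairwise (allrel (dlt d)) qs &
                   forall u, u \in qs -> hblock k d (std u)].
Proof.
move=> /Hpm_decomp[d [bs [E bs_ok]]].
have pbs : {in bs, forall b, is_perm b} by move=> b /bs_ok[].
have [qs [qsq qs_std qs_sorted]] := std_eq_foldr_dsum E pbs.
by exists d, qs; split=> // u u_qs; apply: bs_ok; rewrite -qs_std map_f.
Qed.

Lemma size_inv p : size (Defs.inv p) = size p.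
Proof. by rewrite size_map size_iota. Qed.

Lemma filter_iota_sorted vs n : sorted ltn vs -> all (fun v => v < n) vs ->
  filter (mem vs) (iota 0 n) = vs.
Proof.
move=> svs avs; apply: (irr_sorted_eq ltn_trans ltnn); last 1 first.
- by move=> x; rewrite mem_filter mem_iota /=; case: (boolP (x \in vs)) => // /(allP avs).
- exact/(sorted_filter ltn_trans)/iota_ltn_sorted.
- exact: svs.
Qed.

(* Restricting [inv p] to the values [vs] gives an alternating permutation. *)
Lemma size_le_al p vs (hi : pred nat) : is_perm p -> sorted ltn vs ->
  all (mem p) vs -> (forall i, i < size vs -> hi (nth 0 vs i) = ~~ odd i) ->
  (forall a b, a \in vs -> b \in vs -> hi a -> ~~ hi b -> index b p < index a p) ->
  size vs <= al p.
Proof.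
move=> pp svs avs Halt Hpos.
have avn : all (fun v => v < size p) vs.
  by apply/allP => v vv; apply/is_perm_mem_lt/(allP avs).
have szv : size vs < (size p).+1.
  rewrite ltnS -(size_iota 0 (size p)); apply: uniq_leq_size.
    exact: sorted_uniq ltn_trans ltnn _ svs.
  by move=> v vv; rewrite mem_iota add0n (allP avn v vv).
have szm : size (map (mem vs) (iota 0 (size p))) == size (Defs.inv p).
  by rewrite size_map size_iota size_inv.
set t := Tuple szm.
have Er : restr (Defs.inv p) t = std (map (index^~ p) vs).
  by rewrite /restr /= /inv -map_mask -filter_mask filter_iota_sorted.
have alt : alt_of_len (Defs.inv p) (size vs).
  apply/existsP; exists t; rewrite Er size_std size_map eqxx /=.
  apply/forallP => -[i ilt]; apply/forallP => -[j jlt] /=; apply/implyP => /andP[ei oj].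
  rewrite size_std size_map in ilt jlt.
  rewrite stdE !(nth_map 0) ?size_map // ltn_rank; last exact/map_f/mem_nth.
  by apply: Hpos; rewrite ?mem_nth ?Halt ?oj.
by rewrite /al; apply: (leq_bigmax_cond (Ordinal szv)); rewrite /= alt orbT.
Qed.

(* Reversal keeps [hi] on the even indices only when the length is odd. *)
Lemma size_le_al_dlt d p vs (hi : pred nat) : is_perm p -> sorted (dlt d) vs ->
  (d = false -> odd (size vs)) -> all (mem p) vs ->
  (forall i, i < size vs -> hi (nth 0 vs i) = ~~ odd i) ->
  (forall a b, a \in vs -> b \in vs -> hi a -> ~~ hi b -> index b p < index a p) ->
  size vs <= al p.
Proof.
case: d => pp svs ods avs Halt Hpos; first exact: size_le_al Halt Hpos.
rewrite -size_rev; apply: (size_le_al (hi := hi) pp).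
- by rewrite rev_sorted.
- by rewrite all_rev.
- move=> i; rewrite size_rev => iv; rewrite nth_rev // Halt; last first.
    by rewrite subnSK // leq_subr.
  by rewrite oddB // (ods erefl) /= negbK.
- by move=> a b; rewrite !mem_rev; apply: Hpos.
Qed.

Definition flat_pairs (prs : seq (nat * nat)) : seq nat :=
  flatten [seq [:: pr.1; pr.2] | pr <- prs].

Lemma size_flat_pairs prs : size (flat_pairs prs) = (size prs).*2.
Proof. by elim: prs => // pr prs /= ->; rewrite doubleS. Qed.

Lemma mem_flat_pairs b prs :
  b \in flat_pairs prs -> exists2 pr, pr \in prs & b = pr.1 \/ b = pr.2.
Proof.
elim: prs => // pr prs IH; rewrite [flat_pairs _]/= !inE.
case/or3P => [/eqP->|/eqP->|/IH[pr' pr'_in b_pr']]; [exists pr | exists pr |];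
  rewrite ?mem_head; auto.
by exists pr' => //; rewrite inE pr'_in orbT.
Qed.

Lemma nth_flat_pairs (P : pred nat) prs i :
  (forall pr, pr \in prs -> P pr.1 && ~~ P pr.2) ->
  i < size (flat_pairs prs) -> P (nth 0 (flat_pairs prs) i) = ~~ odd i.
Proof.
elim: prs i => // pr prs IH [|[|i]] Hprs /=;
  have /andP[P1 nP2] := Hprs pr (mem_head _ _); rewrite ?P1 ?(negPf nP2) //.
rewrite !ltnS negbK => ilt; apply: IH ilt => pr' pr'_in.
by apply: Hprs; rewrite inE pr'_in orbT.
Qed.

Lemma nth_cons_flat_pairs (P : pred nat) prs z0 i : P z0 ->
  (forall pr, pr \in prs -> ~~ P pr.1 && P pr.2) ->
  i < size (z0 :: flat_pairs prs) -> P (nth 0 (z0 :: flat_pairs prs) i) = ~~ odd i.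
Proof.
elim: prs z0 i => [|pr prs IH] z0 [|[|i]] Pz Hprs //=;
  have /andP[nP1 P2] := Hprs pr (mem_head _ _); rewrite ?(negPf nP1) //.
rewrite !ltnS negbK => ilt; apply: IH ilt => // pr' pr'_in.
by apply: Hprs; rewrite inE pr'_in orbT.
Qed.

Lemma path_flat_pairs_filter d (P : pred (nat * nat)) z0 prs :
  path (dlt d) z0 (flat_pairs prs) -> path (dlt d) z0 (flat_pairs (filter P prs)).
Proof.
elim: prs z0 => // pr prs IH z0 /= /and3P[z0x xb bprs]; case: (P pr) => /=.
  by rewrite z0x xb IH.
exact/(path_le (@dlt_trans d) (dlt_trans z0x xb))/IH.
Qed.

Lemma index_cat_lt (s t : seq nat) a b : uniq (s ++ t) -> a \in s -> b \in t ->
  index a (s ++ t) < index b (s ++ t).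
Proof.
rewrite cat_uniq => /and3P[_ /hasPn st _] a_s b_t.
have b_s : b \notin s by apply: st.
by rewrite !index_cat a_s (negPf b_s) (leq_trans _ (leq_addr _ _)) ?index_mem.
Qed.

Lemma uniq_cat3_out (L q R : seq nat) : uniq (L ++ q ++ R) -> {in L ++ R, forall x, x \notin q}.
Proof. by rewrite uniq_catCA cat_uniq => /and3P[_ /hasPn]. Qed.

Section ChainBound.

Variables (d : bool) (p L q R : seq nat).
Hypotheses (pp : is_perm p) (pE : p = L ++ q ++ R).

Let uniq_LqR : uniq (L ++ q ++ R).
Proof. by rewrite -pE; apply: is_perm_uniq. Qed.

Let mem_p x : x \in L ++ q ++ R -> x \in p.
Proof. by rewrite pE. Qed.

Lemma chain_left_bound z0 prs : z0 \in q -> path (dlt d) z0 (flat_pairs prs) ->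
  (forall pr, pr \in prs -> pr.1 \in L /\ pr.2 \in q) -> (size prs).*2.+1 <= al p.
Proof.
move=> z0q path_prs Hprs.
have Lq x : x \in L -> x \notin q.
  by move=> xL; apply: uniq_cat3_out uniq_LqR _ _; rewrite mem_cat xL.
have := @size_le_al_dlt d p (z0 :: flat_pairs prs) (mem q) pp.
rewrite /= size_flat_pairs; apply => //.
- by rewrite odd_double.
- rewrite mem_p ?mem_cat ?z0q ?orbT //=.
  apply/allP => v /mem_flat_pairs[pr /Hprs[prL prq] [->|->]]; apply: mem_p;
    by rewrite !mem_cat ?prL ?prq ?orbT.
- move=> i ilt; apply: nth_cons_flat_pairs; rewrite //= ?size_flat_pairs //.
  by move=> pr /Hprs[prL prq]; apply/andP; split; [apply: Lq | ].
- move=> a b _ /[!inE] /orP[/eqP->|/mem_flat_pairs[pr /Hprs[prL prq] [->|->]]] aq;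
    rewrite ?z0q ?prq // => _; rewrite pE.
  by apply: index_cat_lt; rewrite // mem_cat aq.
Qed.

Lemma chain_right_bound z0 prs : path (dlt d) z0 (flat_pairs prs) ->
  (forall pr, pr \in prs -> pr.1 \in R /\ pr.2 \in q) -> (size prs).*2.-1 <= al p.
Proof.
move=> path_prs Hprs; case E: (size prs) => [//|m].
have qR x : x \in q -> x \notin R.
  by apply: contraL => xR; apply: uniq_cat3_out uniq_LqR _ _; rewrite mem_cat xR orbT.
have size_vs : size (take m.+1.*2.-1 (flat_pairs prs)) = m.+1.*2.-1.
  by rewrite size_takel // size_flat_pairs E leq_pred.
rewrite -{1}size_vs; apply: (size_le_al_dlt (hi := mem R) pp).
- exact/take_sorted/(path_sorted path_prs).
- by rewrite size_vs doubleS /= odd_double.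
- apply/allP => v /mem_take/mem_flat_pairs[pr /Hprs[prR prq] [->|->]]; apply: mem_p;
    by rewrite !mem_cat ?prR ?prq ?orbT.
- move=> i; rewrite size_vs => ilt; rewrite nth_take //.
  apply: nth_flat_pairs; last by rewrite size_flat_pairs E (leq_trans ilt) ?leq_pred.
  by move=> pr /Hprs[prR prq]; rewrite /= prR qR.
- move=> a b _ /mem_take/mem_flat_pairs[pr /Hprs[prR prq] [->|->]] aR;
    rewrite /= ?prR // => _; rewrite pE catA.
  by apply: index_cat_lt; rewrite -?catA // mem_cat prq orbT.
Qed.

Lemma chain_bound K z0 prs : al p < K -> z0 \in q -> path (dlt d) z0 (flat_pairs prs) ->
  (forall pr, pr \in prs -> pr.1 \in L ++ R /\ pr.2 \in q) -> size prs < K.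
Proof.
move=> alK z0q path_prs Hprs; pose inL (pr : nat * nat) := pr.1 \in L.
have HL pr : pr \in filter inL prs -> pr.1 \in L /\ pr.2 \in q.
  by rewrite mem_filter => /andP[pr1 /Hprs[_ prq]].
have HR pr : pr \in filter (predC inL) prs -> pr.1 \in R /\ pr.2 \in q.
  by rewrite mem_filter /inL /= => /andP[/negPf pr1 /Hprs[]]; rewrite mem_cat pr1.
have := chain_left_bound z0q (path_flat_pairs_filter inL path_prs) HL.
have := chain_right_bound (path_flat_pairs_filter (predC inL) path_prs) HR.
have := count_predC inL prs; rewrite -!size_filter; lia.
Qed.

End ChainBound.

Lemma straddles_single a x : straddles [:: a] x = false.
Proof. by rewrite /straddles /= !orbF; case: ltngtP. Qed.

Lemma not_straddles_below d c x : {in c, forall a, dlt d x a} -> ~~ straddles c x.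
Proof.
move=> xc; rewrite (straddlesE d) negb_and; apply/orP; left.
by apply/hasPn => a /xc xa; apply/negP => /(dlt_asym xa).
Qed.

Lemma not_straddles_above d c x : {in c, forall a, dlt d a x} -> ~~ straddles c x.
Proof.
move=> cx; rewrite (straddlesE d) negb_and; apply/orP; right.
by apply/hasPn => a /cx ax; apply/negP => /(dlt_asym ax).
Qed.

Lemma straddles_cat_gap d u c x :
  allrel (dlt d) u c -> x \notin c -> ~~ straddles u x -> ~~ straddles c x ->
  straddles (u ++ c) x -> has (fun a => dlt d a x) u /\ {in c, forall b, dlt d x b}.
Proof.
move=> /allrelP uc xc; rewrite !(straddlesE d) !has_cat.
set uB := has _ u; set uA := has _ u; set cB := has _ c; set cA := has _ c.
have no_cross : ~~ (uA && cB).
  apply/negP => /andP[/hasP[a au xa] /hasP[b bc bx]].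
  exact: dlt_asym (dlt_trans xa (uc a b au bc)) bx.
move=> nu nc /andP[below above].
have ncB : ~~ cB.
  by apply/negP => cBt; move: nc no_cross above; rewrite cBt andbT /= => /negPf-> /negPf->.
split; first by move: below; rewrite (negPf ncB) orbF.
move=> b bc; have /orP[bx|//] : dlt d b x || dlt d x b.
  by apply: dlt_total; apply: contraNneq xc => <-.
by move/hasP: ncB; case; exists b.
Qed.

Lemma flatten_take_drop (T : Type) (bs : seq (seq T)) j :
  flatten bs = flatten (take j bs) ++ flatten (drop j bs).
Proof. by rewrite -flatten_cat cat_take_drop. Qed.

Lemma allrel_take_drop d (bs : seq (seq nat)) j :
  pairwise (allrel (dlt d)) bs -> allrel (dlt d) (flatten (take j bs)) (flatten (drop j bs)).
Proof.
elim: bs j => [|b bs IH] [|j] //= /andP[b_bs bs_sorted].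
rewrite allrel_catl IH // andbT allrel_flattenr.
by apply/allP => v /mem_drop; apply: (allP b_bs).
Qed.

Section Chunking.

Variables (d : bool) (k : nat) (O : seq nat) (G : seq nat -> Prop).
Hypothesis G_single : forall a, G [:: a].

Definition chunk_ok (W c : seq nat) : Prop :=
  [/\ c != [::], {in O, forall x, ~~ straddles c x},
      {in W, forall x, x \notin c -> ~~ straddles c x} &
      exists vs, [/\ c = flatten vs, forall v, v \in vs -> G v &
                     pairwise (allrel (dlt d)) vs]].

Definition chain_ok (W : seq nat) (z0 : nat) (prs : seq (nat * nat)) : Prop :=
  [/\ W != [::] -> z0 \in W, path (dlt d) z0 (flat_pairs prs) &
      forall pr, pr \in prs -> pr.1 \in O /\ pr.2 \in W].

(* Invariant of the right-to-left scan of the blocks [bs]: [cs] cuts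
   [flatten bs] into chunks, and every [k.+1] chunks are paid for by a link
   [(x, b)] of the monotone chain [z0, x1, b1, x2, b2, ...] with [xi \in O] and
   [bi \in flatten bs] ([z0] is a dummy while [bs] is empty).  When [open]
   holds, the first chunk is a union of leading blocks that may still absorb
   the next block. *)
Definition chunking_inv (bs cs : seq (seq nat)) z0 prs (open : bool) : Prop :=
  [/\ flatten cs = flatten bs, forall c, c \in cs -> chunk_ok (flatten bs) c,
      size cs <= k.+1 * size prs + open, chain_ok (flatten bs) z0 prs &
      open -> exists j cs', cs = flatten (take j bs) :: cs' /\ z0 \in flatten (take j bs)].

Definition chunkable (bs : seq (seq nat)) : Prop :=
  exists cs z0 prs open, chunking_inv bs cs z0 prs open.

Lemma chunkable_nil : chunkable [::].
Proof. by exists [::], 0, [::], false; split=> //; split. Qed.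

Lemma single_chunk_ok W a : chunk_ok W [:: a].
Proof.
split=> // [x _ | x _ _|]; rewrite ?straddles_single //.
by exists [:: [:: a]]; split=> // v; rewrite inE => /eqP->.
Qed.

Section Step.

Variables (u : seq nat) (bs : seq (seq nat)).
Hypotheses (Gu : G u) (u_nil : u != [::]) (u_small : size u < k).
Hypotheses (u_below : allrel (dlt d) u (flatten bs)) (bs_sorted : pairwise (allrel (dlt d)) bs).
Hypothesis O_out : {in O, forall x, x \notin flatten bs}.

Let W := flatten bs.

Lemma chunk_ok_cons c : {subset c <= W} -> chunk_ok W c -> chunk_ok (u ++ W) c.
Proof.
move=> cW [c_nil cO cW' cG]; split=> // x; rewrite mem_cat => /orP[xu _|]; last exact: cW'.
by apply: not_straddles_below => a /cW; apply: (allrelP u_below).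
Qed.

Lemma chunks_ok_cons cs : flatten cs = W -> (forall c, c \in cs -> chunk_ok W c) ->
  forall c, c \in cs -> chunk_ok (u ++ W) c.
Proof.
move=> csW cs_ok c c_cs; apply: chunk_ok_cons (cs_ok c c_cs) => x xc.
by rewrite -csW; apply/flattenP; exists c.
Qed.

Lemma clean_chunk_ok : ~~ has (straddles u) O -> chunk_ok (u ++ W) u.
Proof.
move=> /hasPn u_clean; split=> // [x|]; first rewrite mem_cat => /orP[->//|xW _].
  by apply: not_straddles_above => a au; apply: (allrelP u_below).
by exists [:: u]; split=> /=; rewrite ?cats0 // => v /[!inE] /eqP->.
Qed.

Lemma path_below a z0 prs : a \in u -> chain_ok W z0 prs -> path (dlt d) a (flat_pairs prs).
Proof.
move=> au [z0W z0_path prs_ok]; case: prs z0_path prs_ok => // pr prs z0_path prs_ok.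
have W_nil : W != [::] by case: (prs_ok pr (mem_head _ _)) => _; case: (W).
apply: (path_le (@dlt_trans d) _ z0_path).
exact: (allrelP u_below) au (z0W W_nil).
Qed.

Lemma chain_ok_cons a z0 new prs : a \in u -> path (dlt d) a (flat_pairs (new ++ prs)) ->
  (forall pr, pr \in new -> pr.1 \in O /\ pr.2 \in u ++ W) ->
  chain_ok W z0 prs -> chain_ok (u ++ W) a (new ++ prs).
Proof.
move=> au a_path new_ok [_ _ prs_ok]; split=> [|//|pr]; first by rewrite mem_cat au.
rewrite mem_cat => /orP[/new_ok //|/prs_ok[prO prW]].
by rewrite mem_cat prW orbT.
Qed.

Lemma step_dirty_block cs z0 prs open x a b :
  chunking_inv bs cs z0 prs open -> x \in O -> a \in u -> b \in u ->
  dlt d a x -> dlt d x b ->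
  chunking_inv (u :: bs) ([seq [:: a] | a <- u] ++ cs) a ((x, b) :: prs) false.
Proof.
move=> [csW cs_ok cs_size chain _] xO au bu ax xb; split=> //.
- by rewrite flatten_cat csW; elim: (u) => //= y v ->.
- move=> c; rewrite mem_cat => /orP[/mapP[y _ ->]|]; first exact: single_chunk_ok.
  exact: chunks_ok_cons.
- by rewrite size_cat size_map /= mulnS addn0; case: (open) cs_size => /=; lia.
have b_path := path_below bu chain.
apply: (chain_ok_cons (new := [:: (x, b)])) chain => //=; first by rewrite ax xb.
by move=> pr /[!inE] /eqP-> /=; rewrite xO mem_cat bu.
Qed.

Lemma step_new_chunk cs z0 prs a :
  chunking_inv bs cs z0 prs false -> ~~ has (straddles u) O -> a \in u ->
  chunking_inv (u :: bs) (u :: cs) a prs true.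
Proof.
move=> [csW cs_ok cs_size chain _] u_clean au; split=> //.
- by rewrite /= csW.
- move=> c /[!inE] /orP[/eqP->|]; [exact: clean_chunk_ok | exact: chunks_ok_cons].
- by rewrite /= addn1 ltnS; move: cs_size; rewrite addn0.
- have a_path := path_below au chain.
  exact: (chain_ok_cons (new := [::])) chain.
by move=> _; exists 1, cs; rewrite /= take0 cats0.
Qed.

Lemma join_chunk_ok j : chunk_ok W (flatten (take j bs)) ->
  ~~ has (straddles (u ++ flatten (take j bs))) O ->
  chunk_ok (u ++ W) (u ++ flatten (take j bs)).
Proof.
set c0 := flatten (take j bs); move=> [_ _ _ [vs [c0E vsG vs_sorted]]] /hasPn join_clean.
have c0W : {subset c0 <= W} by move=> x; rewrite /W (flatten_take_drop _ j) mem_cat => ->.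
split=> //; first by case: (u) u_nil.
  move=> x; rewrite mem_cat => /orP[xu|xW]; first by rewrite mem_cat xu.
  rewrite mem_cat negb_or => /andP[_ x_c0].
  have x_rest : x \in flatten (drop j bs).
    by move: xW; rewrite /W (flatten_take_drop _ j) mem_cat (negPf x_c0).
  apply: not_straddles_above => y; rewrite mem_cat => /orP[yu|y_c0].
    exact: (allrelP u_below) yu xW.
  exact: (allrelP (allrel_take_drop j bs_sorted)) y_c0 x_rest.
exists (u :: vs); split=> /=; first by rewrite -c0E.
  by move=> v /[!inE] /orP[/eqP->//|]; apply: vsG.
rewrite vs_sorted andbT; apply/allP => v v_vs; apply/allrelP => y z yu zv.
by apply: (allrelP u_below) yu _; apply: c0W; rewrite c0E; apply/flattenP; exists v.
Qed.

Lemma step_join cs' z0 prs j a :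
  chunking_inv bs (flatten (take j bs) :: cs') z0 prs true ->
  ~~ has (straddles (u ++ flatten (take j bs))) O -> a \in u ->
  chunking_inv (u :: bs) ((u ++ flatten (take j bs)) :: cs') a prs true.
Proof.
move=> [csW cs_ok cs_size chain _] join_clean au; split=> //.
- by rewrite /= -catA -csW.
- move=> c /[!inE] /orP[/eqP->|c_cs'].
    by apply: join_chunk_ok join_clean; apply: cs_ok; rewrite mem_head.
  by apply: (chunks_ok_cons csW cs_ok); rewrite inE c_cs' orbT.
- have a_path := path_below au chain.
  exact: (chain_ok_cons (new := [::])) chain.
by move=> _; exists j.+1, cs'; rewrite /= mem_cat au.
Qed.

Lemma step_dirty_gap cs' z0 prs j x :
  chunking_inv bs (flatten (take j bs) :: cs') z0 prs true ->
  z0 \in flatten (take j bs) -> ~~ has (straddles u) O ->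
  x \in O -> straddles (u ++ flatten (take j bs)) x ->
  exists a, chunking_inv (u :: bs) (u :: flatten (take j bs) :: cs') a ((x, z0) :: prs) true.
Proof.
set c0 := flatten (take j bs).
move=> [csW cs_ok cs_size chain _] z0_c0 u_clean xO x_gap.
have [_ c0_clean _ _] : chunk_ok W c0 by apply: cs_ok; rewrite mem_head.
have c0W : {subset c0 <= W} by move=> y; rewrite /W (flatten_take_drop _ j) mem_cat => ->.
have u_c0 : allrel (dlt d) u c0.
  by apply/allrelP => y z yu /c0W; apply: (allrelP u_below).
have x_c0 : x \notin c0 by apply: contra (O_out xO); apply: c0W.
have [/hasP[a au ax] x_below] :=
  straddles_cat_gap u_c0 x_c0 (hasPn u_clean x xO) (c0_clean x xO) x_gap.
exists a; split=> //.
- by rewrite /= -csW.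
- move=> c; rewrite inE => /orP[/eqP->|]; first exact: clean_chunk_ok.
  exact: chunks_ok_cons csW cs_ok c.
- by move: cs_size; rewrite /= mulnS; lia.
- case: (chain) => _ z0_path _.
  apply: (chain_ok_cons (new := [:: (x, z0)])) chain => //=.
    by rewrite ax x_below.
  by move=> pr /[!inE] /eqP-> /=; rewrite xO mem_cat c0W ?orbT.
by move=> _; exists 1, (c0 :: cs'); rewrite /= take0 cats0.
Qed.

Lemma chunkable_cons : chunkable bs -> chunkable (u :: bs).
Proof.
move=> [cs [z0 [prs [open inv]]]].
have [a au] : exists a, a \in u by case: (u) u_nil => // a v _; exists a; rewrite mem_head.
case: (boolP (has (straddles u) O)) => [/hasP[x xO]|u_clean].
  rewrite (straddlesE d) => /andP[/hasP[a' a'u a'x] /hasP[b bu xb]].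
  exists ([seq [:: y] | y <- u] ++ cs), a', ((x, b) :: prs), false.
  exact: step_dirty_block inv xO a'u bu a'x xb.
case: open inv => inv; last first.
  by exists (u :: cs), a, prs, true; apply: step_new_chunk inv u_clean au.
have [_ _ _ _ /(_ isT)[j [cs' [cs_eq z0_c0]]]] := inv; rewrite {}cs_eq in inv.
case: (boolP (has (straddles (u ++ flatten (take j bs))) O)) => [/hasP[x xO x_gap]|join_clean].
  have [a' inv'] := step_dirty_gap inv z0_c0 u_clean xO x_gap.
  by exists (u :: flatten (take j bs) :: cs'), a', ((x, z0) :: prs), true.
by exists ((u ++ flatten (take j bs)) :: cs'), a, prs, true; apply: step_join inv join_clean au.
Qed.

End Step.

Lemma chunkable_blocks bs :
  (forall v, v \in bs -> [/\ G v, v != [::] & size v < k]) ->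
  pairwise (allrel (dlt d)) bs -> {in O, forall x, x \notin flatten bs} -> chunkable bs.
Proof.
elim: bs => [|u bs IH] bs_ok; first by move=> _ _; apply: chunkable_nil.
rewrite pairwise_cons -allrel_flattenr => /andP[u_below bs_sorted] O_out.
have [Gu u_nil u_small] := bs_ok u (mem_head _ _).
apply: chunkable_cons => //.
  by move=> x /O_out; rewrite mem_cat negb_or => /andP[].
apply: IH => // [v v_bs|x /O_out]; first by apply: bs_ok; rewrite inE v_bs orbT.
by rewrite mem_cat negb_or => /andP[].
Qed.

End Chunking.

Definition value_interval (p c : seq nat) : Prop :=
  {in p, forall x, x \notin c -> ~~ straddles c x}.

Lemma head_mem (c : seq nat) : c != [::] -> head 0 c \in c.
Proof. by case: c => // a c _; rewrite mem_head. Qed.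

Lemma not_straddles_cases c y : y \notin c -> ~~ straddles c y ->
  {in c, forall a, y < a} \/ {in c, forall a, a < y}.
Proof.
move=> yc; rewrite negb_and => /orP[/hasPn h|/hasPn h]; [left|right] => a ac;
  have := h a ac; rewrite /= -leqNgt leq_eqVlt => /orP[/eqP ya|//].
  by move: yc; rewrite ya ac.
by move: yc; rewrite -ya ac.
Qed.

Section TwoIntervals.

Variables c c' : seq nat.
Hypotheses (c_nil : c != [::]) (c'_nil : c' != [::]).
Hypotheses (c'_out : {in c', forall y, y \notin c}) (c_out : {in c, forall x, x \notin c'}).
Hypotheses (c_int : {in c', forall y, ~~ straddles c y})
           (c'_int : {in c, forall x, ~~ straddles c' x}).

Lemma disjoint_intervals_lt y x : head 0 c' < head 0 c -> y \in c' -> x \in c -> y < x.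
Proof.
move=> hc'c yc' xc.
case: (not_straddles_cases (c'_out yc') (c_int yc')) => [|c_y]; first by apply.
have hc := head_mem c_nil; have hc' := head_mem c'_nil.
case: (not_straddles_cases (c_out hc) (c'_int hc)) => c'_hc.
  by have := c'_hc _ hc'; rewrite ltnNge ltnW.
by have := c'_hc _ yc'; rewrite ltnNge ltnW // c_y.
Qed.

End TwoIntervals.

Lemma disjoint_intervals_cmp c c' y x : c != [::] -> c' != [::] ->
  {in c', forall y, y \notin c} -> {in c', forall y, ~~ straddles c y} ->
  {in c, forall x, ~~ straddles c' x} -> y \in c' -> x \in c ->
  (head 0 c' < head 0 c) = (y < x).
Proof.
move=> c_nil c'_nil c'_out c_int c'_int yc' xc.
have c_out : {in c, forall x, x \notin c'}.
  by move=> z zc; apply/negP => /c'_out; rewrite zc.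
case: ltngtP => hh.
- by rewrite (disjoint_intervals_lt c_nil c'_nil c'_out c_out c_int c'_int hh yc' xc).
- have xy := disjoint_intervals_lt c'_nil c_nil c_out c'_out c'_int c_int hh xc yc'.
  by rewrite ltnNge ltnW // ltnNge ltnW.
- by move: (c'_out _ (head_mem c'_nil)); rewrite hh head_mem.
Qed.

Lemma nth_flatten_disjoint (cs : seq (seq nat)) i j x : uniq (flatten cs) ->
  i < size cs -> j < size cs -> i != j ->
  x \in nth [::] cs i -> x \in nth [::] cs j -> False.
Proof.
have mem_rest cs' n : n < size cs' -> x \in nth [::] cs' n -> x \in flatten cs'.
  by move=> nlt xn; apply/flattenP; exists (nth [::] cs' n); rewrite ?mem_nth.
elim: cs i j => [|c cs IH] [|i] [|j] //=; rewrite cat_uniq => /and3P[_ /hasPn c_rest U];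
  rewrite ?ltnS => ilt jlt ij.
- by move=> xc /(mem_rest _ _ jlt) /c_rest; rewrite xc.
- by move=> /(mem_rest _ _ ilt) /c_rest /negP.
- exact: IH.
Qed.

Section Inflation.

Variables (p : seq nat) (cs : seq (seq nat)).
Hypotheses (pp : is_perm p) (csp : flatten cs = p).
Hypothesis cs_ok : forall c, c \in cs -> c != [::] /\ value_interval p c.

Let chunk i := nth [::] cs i.
Let heads := map (head 0) cs.

Let chunk_in i : i < size cs -> chunk i \in cs. Proof. exact: mem_nth. Qed.

Let chunk_sub i y : i < size cs -> y \in chunk i -> y \in p.
Proof. by move=> ilt yi; rewrite -csp; apply/flattenP; exists (chunk i); rewrite ?chunk_in. Qed.

Let uniq_cs : uniq (flatten cs). Proof. by rewrite csp; apply: is_perm_uniq. Qed.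

Lemma chunk_head_cmp i j y x : i < size cs -> j < size cs -> i != j ->
  y \in chunk j -> x \in chunk i -> (head 0 (chunk j) < head 0 (chunk i)) = (y < x).
Proof.
move=> ilt jlt ij; have [i_nil i_int] := cs_ok (chunk_in ilt).
have [j_nil j_int] := cs_ok (chunk_in jlt).
have j_out z : z \in chunk j -> z \notin chunk i.
  by move=> zj; apply/negP => zi; apply: (nth_flatten_disjoint uniq_cs ilt jlt ij zi zj).
apply: disjoint_intervals_cmp => // z zin; first by apply: i_int (chunk_sub jlt zin) (j_out z zin).
apply: j_int (chunk_sub ilt zin) _; apply/negP => zj.
by have := j_out z zj; rewrite zin.
Qed.

Lemma uniq_heads : uniq heads.
Proof.
apply/(uniqP 0) => i j; rewrite !inE /= size_map => ilt jlt; rewrite !(nth_map [::]) //.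
have [i_nil _] := cs_ok (chunk_in ilt); have [j_nil _] := cs_ok (chunk_in jlt).
case: (eqVneq i j) => // ij hij; exfalso.
apply: (nth_flatten_disjoint uniq_cs ilt jlt ij (head_mem i_nil)).
by rewrite -/(chunk i) hij head_mem.
Qed.

Lemma nth_std_heads_lt i j : i < size cs -> j < size cs ->
  (nth 0 (std heads) j < nth 0 (std heads) i) = (head 0 (chunk j) < head 0 (chunk i)).
Proof.
move=> ilt jlt; rewrite stdE !(nth_map 0) ?size_map // ltn_rank.
  by rewrite !(nth_map [::]).
by apply: mem_nth; rewrite size_map.
Qed.

Lemma count_lt_chunk i j x : i < size cs -> j < size cs -> i != j -> x \in chunk i ->
  count (fun y => y < x) (chunk j) =
  if head 0 (chunk j) < head 0 (chunk i) then size (chunk j) else 0.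
Proof.
move=> ilt jlt ij xi; have cmp := chunk_head_cmp ilt jlt ij _ xi.
case: ifP => hh; [rewrite -count_predT | rewrite -(count_pred0 (chunk j))];
  by apply: eq_in_count => y yj; rewrite /= -cmp ?hh.
Qed.

Lemma inflate_chunks : p = inflate (std heads) (map std cs).
Proof.
rewrite /inflate size_std size_map -{1}csp -{1}(mkseq_nth [::] cs) /mkseq; congr flatten.
apply/eq_in_map => i; rewrite mem_iota add0n => /= ilt.
rewrite (nth_map [::]) // stdE -map_comp -[LHS]map_id; apply/eq_in_map => x xi /=.
rewrite -{1}(rank_perm pp (chunk_sub ilt xi)) /rank -csp count_flatten sumnE big_map.
rewrite (big_nth [::]) big_mkord (bigD1 (Ordinal ilt)) //= addnC; congr (_ + _).
rewrite [RHS]big_mkcond [RHS](bigD1 (Ordinal ilt)) //= ltnn add0n.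
apply: eq_bigr => -[j jlt] ji; rewrite /= (nth_map [::]) // size_std nth_std_heads_lt //.
by apply: count_lt_chunk; rewrite // eq_sym.
Qed.

End Inflation.

Definition good_chunk (k : nat) (p c : seq nat) : Prop :=
  [/\ c != [::], Hpm k (std c) & value_interval p c].

Lemma piece_chunks k K p L q R : 2 <= k -> is_perm p -> p = L ++ q ++ R -> al p < K ->
  q != [::] -> Hpm k (std q) ->
  exists cs, [/\ flatten cs = q, size cs <= k.+1 * K & forall c, c \in cs -> good_chunk k p c].
Proof.
move=> k2 pp pE alK q_nil Hq.
have U : uniq (L ++ q ++ R) by rewrite -pE; apply: is_perm_uniq.
have [d [qs [qsq qs_sorted qs_ok]]] := Hpm_blocks Hq.
have qs_small v : v \in qs -> [/\ hblock k d (std v), v != [::] & size v < k].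
  move=> /qs_ok hv; have [_ v_nil _ v_small] := hv; split=> //; last by rewrite -(size_std v).
  by apply/eqP => v0; apply: v_nil; rewrite v0.
have := chunkable_blocks (O := L ++ R) (fun a => hblock_single d a k2) qs_small qs_sorted.
rewrite qsq => /(_ (uniq_cat3_out U))[cs [z0 [prs [open inv]]]].
have [csq cs_ok cs_size [z0q z0_path prs_ok] _] := inv.
rewrite qsq in csq cs_ok z0q prs_ok.
have prsK := chain_bound pp pE alK (z0q q_nil) z0_path prs_ok.
exists cs; split=> //.
  have : k.+1 * (size prs).+1 <= k.+1 * K by rewrite leq_mul2l prsK orbT.
  by move: cs_size; rewrite mulnS; case: (open) => /=; lia.
move=> c c_cs; have [c_nil c_O c_q [vs [cE vsG vs_sorted]]] := cs_ok c c_cs; split=> //.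
  by rewrite cE; apply: Hpm_flatten vs_sorted vsG.
move=> x; rewrite pE !mem_cat => /or3P[xL|xq|xR] xc; [apply: c_O | exact: c_q | apply: c_O];
  by rewrite mem_cat ?xL ?xR ?orbT.
Qed.

Lemma pieces_chunks k K p L ps : 2 <= k -> is_perm p -> al p < K ->
  p = L ++ flatten ps -> (forall q, q \in ps -> q != [::] /\ Hpm k (std q)) ->
  exists cs, [/\ flatten cs = flatten ps, size cs <= k.+1 * K * size ps &
                 forall c, c \in cs -> good_chunk k p c].
Proof.
move=> k2 pp alK; elim: ps L => [|q ps IH] L pE ps_ok; first by exists [::].
have [q_nil Hq] := ps_ok q (mem_head _ _).
have [cs1 [cs1q size_cs1 cs1_ok]] := piece_chunks k2 pp pE alK q_nil Hq.
have pE' : p = (L ++ q) ++ flatten ps by rewrite pE catA.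
have ps_ok' q' : q' \in ps -> q' != [::] /\ Hpm k (std q').
  by move=> q'_ps; apply: ps_ok; rewrite inE q'_ps orbT.
have [cs2 [cs2ps size_cs2 cs2_ok]] := IH _ pE' ps_ok'.
exists (cs1 ++ cs2); split.
- by rewrite flatten_cat cs1q cs2ps.
- by rewrite size_cat /= mulnS leq_add.
- by move=> c; rewrite mem_cat => /orP[/cs1_ok|/cs2_ok].
Qed.

Lemma greedy_pieces k p a r : greedy k p a r ->
  exists ps, [/\ flatten ps = drop a p, size ps = r &
                 forall q, q \in ps -> q != [::] /\ Hpm k (std q)].
Proof.
elim=> [|{}a b {}r ab bp Hab _ _ [ps [psp size_ps ps_ok]]]; first by exists [::]; rewrite drop_size.
exists (take (b - a) (drop a p) :: ps); split=> /=.
- by rewrite psp -{2}(subnK (ltnW ab)) -drop_drop cat_take_drop.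
- by rewrite size_ps.
move=> q; rewrite inE => /orP[/eqP->|]; last exact: ps_ok.
by split=> //; rewrite -size_eq0 size_takel ?size_drop ?leq_sub2r // -lt0n subn_gt0.
Qed.

Definition perms_upto (n : nat) : seq (seq nat) :=
  flatten [seq permutations (iota 0 j) | j <- iota 0 n.+1].

Lemma perms_upto_perm n s : s \in perms_upto n -> is_perm s.
Proof.
case/flattenP => _ /mapP[j _ ->]; rewrite mem_permutations => ps.
by rewrite /is_perm (perm_size ps) size_iota.
Qed.

Lemma mem_perms_upto n s : is_perm s -> size s <= n -> s \in perms_upto n.
Proof.
move=> ps sn; apply/flattenP; exists (permutations (iota 0 (size s))).
  by apply/mapP; exists (size s); rewrite // mem_iota.
by rewrite mem_permutations.
Qed.

Theorem mainTheorem6 (k K : nat) :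
  exists P : seq (seq nat),
    (forall s, s \in P -> is_perm s) /\
    forall p : seq nat, is_perm p ->
      al p < K -> (exists r, s_is k p r /\ r < K) ->
      in_inflation P (Hpm k) p.
Proof.
exists (perms_upto (k.+1 * K * K)); split=> [s|p pp alK [r [[k2 greedy_r] rK]]].
  exact: perms_upto_perm.
have [ps [psp size_ps ps_ok]] := greedy_pieces greedy_r.
rewrite drop0 in psp.
have [cs [csp size_cs cs_ok]] := pieces_chunks (L := [::]) k2 pp alK (esym psp) ps_ok.
rewrite psp in csp.
have cs_int c : c \in cs -> c != [::] /\ value_interval p c by case/cs_ok.
have sigma_perm := std_is_perm (uniq_heads pp csp cs_int).
exists (std (map (head 0) cs)), (map std cs); split=> //.
- apply: mem_perms_upto; rewrite // size_std size_map (leq_trans size_cs) //.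
  by rewrite leq_mul2l size_ps ltnW ?orbT.
- by rewrite size_std !size_map.
- by move=> _ /mapP[c /cs_ok[_ Hc _] ->]; split=> //; case: Hc => -[].
- exact: inflate_chunks.
Qed.
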